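(* Let $(S,K,I)$ be a split graph. If the factor graph $\Phi(S)$ is connected, then its diameter is at most $\lceil(\deg(S)+1)/2\rceil$.
   Context: A split graph $(S,K,I)$ is a graph $S$ together with a fixed partition $V(S)=K\dot\cup I$, where $K$ is a clique and $I$ is an independent set. For a vertex $v$ of $S$, $N_v$ denotes its open neighborhood in $S$ and $d_v=|N_v|$; $\eta_{uv}=|N_u\cap N_v|$. A 2-switch in $S$ replaces edges $ab,cd$ with $ac,bd$ when $ab,cd\in E(S)$ and $ac,bd\notin E(S)$. The factor graph $\Phi(S)$ is the loopless multigraph with vertex set $I$ in which, for distinct $u,v\in I$, there is one edge joining $u$ and $v$ for each 2-switch of $S$ acting on $u$ and $v$; equivalently, the multiplicity of $uv$ is $\sigma_{uv}=(d_u-\eta_{uv})(d_v-\eta_{uv})$. The 2-switch-degree $\deg(S)$ is the number of 2-switches acting on $S$, which equals the number of edges of $\Phi(S)$ counted with multiplicity, i.e. $\sum_{\{u,v\}\subseteq I}\sigma_{uv}$. Distances (and hence the diameter) in $\Phi(S)$ are measured ignoring edge multiplicities, i.e. as in the underlying simple graph. *)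

From mathcomp Require Import all_boot.
Set Implicit Arguments. Unset Strict Implicit. Unset Printing Implicit Defensive.

Section SplitGraph.
Variables (T : finType) (e : rel T).

Definition simple_graph : Prop := symmetric e /\ irreflexive e.

Definition split_graph (K I : {set T}) : Prop :=
  [/\ simple_graph, K :|: I = setT, K :&: I = set0,
      {in K &, forall u v, u != v -> e u v} &
      {in I &, forall u v, ~~ e u v}].

Definition nbhd (v : T) : {set T} := [set w | e v w].
Definition dg (v : T) : nat := #|nbhd v|.
Definition eta (u v : T) : nat := #|nbhd u :&: nbhd v|.

(* multiplicity of the edge uv in the factor graph *)
Definition sigma (u v : T) : nat := (dg u - eta u v) * (dg v - eta u v).

(* 2-switch-degree: sum of sigma over unordered pairs {u,v} of I *)
Definition switch_deg (I : {set T}) : nat :=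
  \sum_(u in I) \sum_(v in I | enum_rank u < enum_rank v) sigma u v.

(* adjacency of the underlying simple graph of Phi(S) (vertex set I) *)
Definition phi_adj (I : {set T}) : rel T :=
  fun u v => [&& u \in I, v \in I, u != v & 0 < sigma u v].

Definition phi_connected (I : {set T}) : Prop :=
  {in I &, forall u v, connect (phi_adj I) u v}.

Fixpoint ball (I : {set T}) (n : nat) (u : T) : {set T} :=
  match n with
  | 0 => [set u]
  | n'.+1 => ball I n' u :|:
             [set y | [exists x in ball I n' u, phi_adj I x y]]
  end.

(* distance in Phi(S) (ignoring multiplicities): least k with v in ball k u;
   equals #|T|.+1 if no such k <= #|T| exists (never happens if connected) *)
Definition phi_dist (I : {set T}) (u v : T) : nat :=
  find (fun k => v \in ball I k u) (iota 0 #|T|.+1).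

Definition phi_diameter (I : {set T}) : nat :=
  \max_(u in I) \max_(v in I) phi_dist I u v.

End SplitGraph.

From mathcomp Require Import all_boot zify.
Set Implicit Arguments. Unset Strict Implicit. Unset Printing Implicit Defensive.

(* Take a shortest path u = f 0, ..., f m in Phi(S).  Consecutive vertices have
   incomparable neighbourhoods (sigma > 0), non-consecutive ones comparable
   neighbourhoods (sigma = 0).  For an interior edge xy of the path, preceded
   by w and followed by z, the comparabilities of N_w with N_y, of N_x with N_z
   and of N_w with N_z rule out |N_x \ N_y| = |N_y \ N_x| = 1, so sigma >= 2
   there.  The edges of the path are distinct edges of Phi(S), hence
   2 (m - 1) <= deg(S).  Only neighbourhoods enter the argument. *)

Section NestedSets.
Variable T : finType.
Implicit Types W X Y Z : {set T}.

Definition nested X Y := (X \subset Y) || (Y \subset X).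

Lemma subset_chain_step W X Y Z :
  W \subset Y -> X \subset Z -> ~~ (W \subset X) -> ~~ (Y \subset Z) ->
  #|Y :\: X| <= 1 -> ~~ (W \subset Z).
Proof.
move=> sWY sXZ /subsetPn[p pW pX] /subsetPn[q qY qZ] /card_le1_eqP YX_le1.
have qX : q \notin X by apply: contra qZ; apply: subsetP.
have p_eq_q : p = q.
  by apply: YX_le1; rewrite !inE ?pX ?qX ?qY ?(subsetP sWY p pW).
by apply/subsetPn; exists p; rewrite // p_eq_q.
Qed.

Lemma nested_chain_card W X Y Z :
  ~~ nested W X -> ~~ nested X Y -> ~~ nested Y Z ->
  nested W Y -> nested X Z -> nested W Z ->
  1 < #|X :\: Y| * #|Y :\: X|.
Proof.
rewrite /nested !negb_or => /andP[nWX nXW] /andP[nXY nYX] /andP[nYZ nZY].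
move=> cWY cXZ cWZ.
have XY_gt0 : 0 < #|X :\: Y| by rewrite card_gt0 setD_eq0.
have YX_gt0 : 0 < #|Y :\: X| by rewrite card_gt0 setD_eq0.
suff : (1 < #|X :\: Y|) || (1 < #|Y :\: X|) by case/orP; nia.
rewrite !ltnNge -negb_and; apply/negP => /andP[XY_le1 YX_le1].
case/orP: cWY => [sWY|sYW]; case/orP: cXZ => [sXZ|sZX];
  case/orP: cWZ => [sWZ|sZW].
- by have := subset_chain_step sWY sXZ nWX nYZ YX_le1; rewrite sWZ.
- by rewrite (subset_trans sZW sWY) in nZY.
- by rewrite (subset_trans sWZ sZX) in nWX.
- by rewrite (subset_trans sZW sWY) in nZY.
- by rewrite (subset_trans sYW sWZ) in nYZ.
- by rewrite (subset_trans sXZ sZW) in nXW.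
- by rewrite (subset_trans sWZ sZX) in nWX.
- by have := subset_chain_step sZX sYW nZY nXW XY_le1; rewrite sZW.
Qed.

End NestedSets.

Lemma double_le_sum_path (g : nat -> nat) m :
  (forall i, i < m -> 0 < g i) -> (forall i, 0 < i -> i.+1 < m -> 1 < g i) ->
  m.*2 <= (\sum_(0 <= i < m) g i).+2.
Proof.
case: m => [|[|n]] g_gt0 g_gt1; first by rewrite big_geq.
  by rewrite big_nat1.
rewrite big_ltn // big_nat_recr //=.
have : \sum_(1 <= i < n.+1) 2 <= \sum_(1 <= i < n.+1) g i.
  rewrite big_nat [X in _ <= X]big_nat.
  by apply: leq_sum => i /andP[i_gt0 lt_in]; apply: g_gt1.
rewrite sum_nat_const_nat.
have := g_gt0 0 isT; have := g_gt0 n.+1 (ltnSn _); lia.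
Qed.

Section FactorGraph.
Variables (T : finType) (e : rel T) (I : {set T}).
Local Notation N := (nbhd e).
Local Notation adj := (phi_adj e I).
Local Notation ball := (ball e I).

Lemma sigmaE u v : sigma e u v = #|N u :\: N v| * #|N v :\: N u|.
Proof. by rewrite /sigma /eta /dg !cardsD setIC. Qed.

Lemma sigmaC u v : sigma e u v = sigma e v u.
Proof. by rewrite !sigmaE mulnC. Qed.

Lemma phi_adjE u v :
  adj u v = [&& u \in I, v \in I, u != v & ~~ nested (N u) (N v)].
Proof.
by rewrite /phi_adj sigmaE muln_gt0 !card_gt0 !setD_eq0 /nested negb_or.
Qed.

Definition edge_pair (u v : T) : T * T :=
  if enum_rank u < enum_rank v then (u, v) else (v, u).

Lemma sigma_edge_pair u v :
  sigma e (edge_pair u v).1 (edge_pair u v).2 = sigma e u v.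
Proof. by rewrite /edge_pair; case: ifP => //= _; apply: sigmaC. Qed.

Lemma edge_pair_inj u v u' v' : edge_pair u v = edge_pair u' v' ->
  (u = u' /\ v = v') \/ (u = v' /\ v = u').
Proof. by rewrite /edge_pair; do 2!case: ifP => _; case=> -> ->; tauto. Qed.

Lemma edge_pair_rank u v : u != v ->
  enum_rank (edge_pair u v).1 < enum_rank (edge_pair u v).2.
Proof.
move=> neq_uv; rewrite /edge_pair; case: ifP => //= /negbT.
rewrite -leqNgt leq_eqVlt => /orP[/eqP/ord_inj/enum_rank_inj eq_vu | //].
by rewrite eq_vu eqxx in neq_uv.
Qed.

Lemma switch_degE : switch_deg e I =
  \sum_(p | [&& p.1 \in I, p.2 \in I & enum_rank p.1 < enum_rank p.2])
     sigma e p.1 p.2.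
Proof. by rewrite /switch_deg pair_big_dep. Qed.

Section InducedPath.
Variables (f : nat -> T) (m : nat).
Hypothesis path_adj : forall i, i < m -> adj (f i) (f i.+1).
Hypothesis path_nonadj : forall i j, i.+1 < j <= m -> ~~ adj (f i) (f j).
Hypothesis path_inj : {in [pred i | i <= m] &, injective f}.

Lemma path_mem i : 0 < m -> i <= m -> f i \in I.
Proof.
move=> m_gt0; rewrite leq_eqVlt => /orP[/eqP -> | /path_adj/and3P[] //].
have /path_adj/and3P[_] : m.-1 < m by rewrite ltn_predL.
by rewrite prednK.
Qed.

Lemma path_nested i j : i.+1 < j <= m -> nested (N (f i)) (N (f j)).
Proof.
move=> ij_m; have m_gt0 : 0 < m by lia.
have fi_neq_fj : f i != f j by rewrite (inj_in_eq path_inj) ?inE; lia.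
by have := path_nonadj ij_m; rewrite phi_adjE fi_neq_fj !path_mem ?negbK //; lia.
Qed.

Lemma path_sigma_gt1 i : 0 < i -> i.+1 < m -> 1 < sigma e (f i) (f i.+1).
Proof.
move=> i_gt0 lt_im; rewrite sigmaE.
have incomparable k : k < m -> ~~ nested (N (f k)) (N (f k.+1)).
  by move/path_adj; rewrite phi_adjE => /and4P[].
apply: (@nested_chain_card _ (N (f i.-1)) _ _ (N (f i.+2))).
- by rewrite -[in f i](prednK i_gt0) incomparable; lia.
- by rewrite incomparable; lia.
- by rewrite incomparable.
- by apply: path_nested; rewrite prednK //; lia.
- by apply: path_nested; lia.
- by apply: path_nested; rewrite prednK //; lia.
Qed.

Lemma sum_sigma_path_le :
  \sum_(0 <= i < m) sigma e (f i) (f i.+1) <= switch_deg e I.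
Proof.
pose F (p : T * T) := sigma e p.1 p.2.
pose g (i : 'I_m) := edge_pair (f i) (f i.+1).
have f_eq k l : k <= m -> l <= m -> f k = f l -> k = l by apply: path_inj.
have g_inj : injective g.
  move=> i j; have := ltn_ord i; have := ltn_ord j.
  move=> lt_jm lt_im /edge_pair_inj[[eq1 eq2]|[eq1 eq2]]; apply: val_inj.
    by apply: f_eq eq1; apply: ltnW.
  have := f_eq _ _ (ltnW lt_im) lt_jm eq1.
  by have := f_eq _ _ lt_im (ltnW lt_jm) eq2; lia.
rewrite big_mkord (eq_bigr (F \o g)) => [|i _]; last first.
  by rewrite /= /F sigma_edge_pair.
rewrite -(big_imset F (in2W g_inj)) switch_degE.
apply: (sub_le_big leqnn (fun a b => leq_addr b a)) => _ /imsetP[i _ ->].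
have /and4P[fiI fi1I neq _] := path_adj (ltn_ord i).
by rewrite edge_pair_rank // andbT /g /edge_pair; case: ifP; rewrite /= fiI fi1I.
Qed.

Lemma induced_path_length : m.*2 <= (switch_deg e I).+2.
Proof.
have sigma_gt0 i : i < m -> 0 < sigma e (f i) (f i.+1).
  by move/path_adj; rewrite /phi_adj => /and4P[].
apply: leq_trans (double_le_sum_path sigma_gt0 path_sigma_gt1) _.
by rewrite !ltnS sum_sigma_path_le.
Qed.

End InducedPath.

Lemma mem_ballS i u x y : x \in ball i u -> adj x y -> y \in ball i.+1 u.
Proof.
move=> xb xy; rewrite /= !inE; apply/orP; right.
by apply/existsP; exists x; rewrite xb.
Qed.

Lemma ballS_pred i u y : y \in ball i.+1 u -> y \notin ball i u ->
  exists2 x, x \in ball i u & adj x y.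
Proof. by rewrite /= !inE => /orP[->//|/existsP[x /andP[xb xy]]] _; exists x. Qed.

Lemma mem_ball_last u k x p :
  x \in ball k u -> path adj x p -> last x p \in ball (k + size p) u.
Proof.
elim: p x k => [|y p IHp] x k xb /=; first by rewrite addn0.
by case/andP=> xy yp; rewrite addnS -addSn; apply: IHp yp; apply: mem_ballS xb xy.
Qed.

Definition geodesic (u : T) (f : nat -> T) (m : nat) :=
  [/\ forall i, i < m -> adj (f i) (f i.+1),
      forall i, i <= m -> f i \in ball i u
    & forall i j, i < j <= m -> f j \notin ball i u].

Lemma geodesic_exists u v m :
  v \in ball m u -> (forall j, j < m -> v \notin ball j u) ->
  exists2 f, geodesic u f m & f m = v.
Proof.
elim: m v => [|m IHm] v vb vn.
  exists (fun=> v) => //; split=> // [i | i j]; rewrite ?leqn0.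
    by move=> /eqP->.
  by lia.
have [x xb xv] := ballS_pred vb (vn m (ltnSn m)).
have xn j : j < m -> x \notin ball j u.
  move=> lt_jm; apply/negP => xj.
  by have := vn j.+1 lt_jm; rewrite (mem_ballS xj xv).
have [g [g_adj g_ball g_far] gm] := IHm x xb xn.
exists (fun i => if i <= m then g i else v); last by rewrite ltnn.
split=> [i | i | i j].
- move=> le_im; have [lt_im | ->] : i < m \/ i = m by lia.
    by rewrite ltnW // lt_im; apply: g_adj.
  by rewrite leqnn ltnn gm.
- case: ifP => [le_im _ | /negbT lt_mi le_i]; first exact: g_ball.
  by have -> : i = m.+1 by lia.
- case: ifP => [le_jm /andP[lt_ij _] | _ /andP[lt_ij le_j]].
    by apply: g_far; rewrite lt_ij.
  by apply: vn; lia.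
Qed.

Lemma geodesic_nonadj u f m : geodesic u f m ->
  forall i j, i.+1 < j <= m -> ~~ adj (f i) (f j).
Proof.
case=> _ f_ball f_far i j /andP[lt_ij le_jm].
apply: contraNN (f_far _ _ _) => [fij|].
  by apply: mem_ballS fij; apply: f_ball; lia.
by rewrite lt_ij.
Qed.

Lemma geodesic_inj u f m :
  geodesic u f m -> {in [pred i | i <= m] &, injective f}.
Proof.
case=> _ f_ball f_far.
have f_neq k l : k < l <= m -> f k != f l.
  by move=> /[dup] kl /f_far; apply: contraNneq => <-; apply: f_ball; lia.
move=> i j; rewrite !inE => le_im le_jm eq_f.
by case: (ltngtP i j) => // lt; [have := f_neq i j | have := f_neq j i];
  rewrite eq_f eqxx; lia.
Qed.

Lemma geodesic_length u f m : geodesic u f m -> m.*2 <= (switch_deg e I).+2.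
Proof.
move=> geo; apply: (induced_path_length (f := f)).
- by case: geo.
- exact: geodesic_nonadj geo.
- exact: geodesic_inj geo.
Qed.

Lemma phi_dist_min u v : connect adj u v ->
  v \in ball (phi_dist e I u v) u /\
  forall j, j < phi_dist e I u v -> v \notin ball j u.
Proof.
case/connectP=> p p_path ->{v}; case: (shortenP p_path) => q q_path q_uniq _.
have lt_qT : size q < #|T|.
  by have := max_card (mem (u :: q)); rewrite (card_uniqP q_uniq).
have vb : last u q \in ball (size q) u.
  by rewrite -[size q]add0n; apply: mem_ball_last; rewrite //= inE.
rewrite /phi_dist; set P := fun k => _ \in ball k u.
have has_P : has P (iota 0 #|T|.+1).
  apply/hasP; exists (size q) => //.
  by rewrite mem_iota add0n ltnS (ltnW lt_qT).
have lt_find : find P (iota 0 #|T|.+1) < #|T|.+1.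
  by rewrite -[X in _ < X](size_iota 0) -has_find.
split; first by have := nth_find 0 has_P; rewrite nth_iota.
move=> j lt_j; have := before_find 0 lt_j; rewrite nth_iota /P => [->//|].
exact: ltn_trans lt_j lt_find.
Qed.

Lemma phi_dist_le u v : connect adj u v ->
  phi_dist e I u v <= uphalf (switch_deg e I + 1).
Proof.
move=> /phi_dist_min[vb vn]; have [f geo _] := geodesic_exists vb vn.
by rewrite geq_uphalf_double addn1; apply: geodesic_length geo.
Qed.

End FactorGraph.

Theorem theorem4p7 (T : finType) (e : rel T) (K I : {set T}) :
  split_graph e K I ->
  phi_connected e I ->
  phi_diameter e I <= uphalf (switch_deg e I + 1).
Proof.
move=> _ connected_phi; apply/bigmax_leqP => u uI; apply/bigmax_leqP => v vI.
exact/phi_dist_le/connected_phi.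
Qed.
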